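(* (a) Let $V\subset\mathbb R^m$ be a closed convex body centrally symmetric with respect to the origin, with width $w(V)$. For every $x\in\mathbb R^m\setminus V$ and every $P\in\mathcal P_{n,m}$, $$|P(x)|\le T_n\big(2|x|/w(V)\big)\|P\|_{C(V)}.$$ (b) For every $\lambda>0$, $k\in\mathbb Z^m_+$, $x\in\mathbb R^m$ with $|x_j|>\lambda$ for all $j=1,\dots,m$, and every $P\in\mathcal Q_{n,m}$, $$|D^kP(x)|\le\lambda^{-\langle k\rangle}\Big|\prod_{j=1}^mT_n^{(k_j)}(x_j/\lambda)\Big|\,\|P\|_{C(Q^m_\lambda)}.$$
   Context: $|x|$ is the Euclidean norm. The width $w(V)$ is the minimum distance between two parallel supporting hyperplanes of $V$. $\mathcal P_{n,m}$ is the set of polynomials $\sum_{\langle k\rangle\le n}c_kx^k$ in $m$ variables with complex coefficients of total degree at most $n$; $\mathcal Q_{n,m}$ is the set of polynomials $\sum_{k\in\mathbb Z^m_+,\max_jk_j\le n}c_kx^k$ with complex coefficients of degree at most $n$ in each variable. For $k\in\mathbb Z^m_+$: $\langle k\rangle=\sum k_j$, $x^k=\prod x_j^{k_j}$, $D^k=\prod\partial^{k_j}/\partial x_j^{k_j}$. $Q^m_\lambda=\{x:\max_j|x_j|\le\lambda\}$. $T_n(u)=\frac12((u+\sqrt{u^2-1})^n+(u-\sqrt{u^2-1})^n)$ is the Chebyshev polynomial; $\|P\|_{C(S)}=\max_S|P|$. *)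

From mathcomp Require Import all_boot all_order all_algebra.
From mathcomp Require Import all_classical all_reals all_analysis.

Set Implicit Arguments.
Unset Strict Implicit.
Unset Printing Implicit Defensive.

Import Order.TTheory GRing.Theory Num.Theory.
From mathcomp.real_closed Require Import complex.
Local Open Scope ring_scope.
Local Open Scope classical_set_scope.

Section Defs.
Variable R : realType.

Definition dotv (m : nat) (x y : 'rV[R]_m) : R := \sum_(j < m) x ord0 j * y ord0 j.
Definition enorm (m : nat) (x : 'rV[R]_m) : R := Num.sqrt (dotv x x).

Definition eclosed (m : nat) (V : set 'rV[R]_m) : Prop :=
  forall x, (forall e : R, 0 < e -> exists2 v, V v & enorm (x - v) < e) -> V x.
Definition convex_set (m : nat) (V : set 'rV[R]_m) : Prop :=
  forall a b (t : R), V a -> V b -> 0 <= t <= 1 -> V (t *: a + (1 - t) *: b).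
Definition ebounded (m : nat) (V : set 'rV[R]_m) : Prop :=
  exists M : R, forall v, V v -> enorm v <= M.
Definition nonempty_interior (m : nat) (V : set 'rV[R]_m) : Prop :=
  exists x (r : R), 0 < r /\ forall y, enorm (y - x) < r -> V y.
Definition convex_body (m : nat) (V : set 'rV[R]_m) : Prop :=
  [/\ eclosed V, ebounded V, convex_set V & nonempty_interior V].
Definition centrally_symmetric (m : nat) (V : set 'rV[R]_m) : Prop :=
  forall v, V v -> V (- v).

Definition supporting_hyperplane (m : nat) (V : set 'rV[R]_m) (u : 'rV[R]_m) (c : R) :=
  enorm u = 1 /\
  ((forall v, V v -> dotv v u <= c) \/ (forall v, V v -> c <= dotv v u)) /\
  exists2 v, V v & dotv v u = c.

(* width: minimum distance between two (distinct) parallel supporting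
   hyperplanes {<y,u> = c1} and {<y,u> = c2}; their distance is |c1 - c2| *)
Definition width (m : nat) (V : set 'rV[R]_m) : R :=
  inf [set d : R | exists u c1 c2, [/\ supporting_hyperplane V u c1,
        supporting_hyperplane V u c2, c1 != c2 & d = `|c1 - c2|]].

Definition mindex (m n : nat) := {ffun 'I_m -> 'I_n.+1}.
Definition deg (m n : nat) (k : mindex m n) : nat := \sum_(j < m) (k j : nat).

Definition monom (m n : nat) (k : mindex m n) (x : 'rV[R]_m) : R :=
  \prod_(j < m) x ord0 j ^+ k j.

(* P in P_{n,m}: coefficients c : mindex m n -> C, only monomials of total
   degree <= n are used; evaluation P(x) = sum_{<k> <= n} c_k x^k *)
Definition evalP (m n : nat) (c : mindex m n -> R[i]) (x : 'rV[R]_m) : R[i] :=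
  \sum_(k : mindex m n | (deg k <= n)%N) c k * real_complex R (monom k x).

(* P in Q_{n,m}: P(x) = sum_{max_j k_j <= n} c_k x^k *)
Definition evalQ (m n : nat) (c : mindex m n -> R[i]) (x : 'rV[R]_m) : R[i] :=
  \sum_(k : mindex m n) c k * real_complex R (monom k x).

(* (D^k P)(x) for P in Q_{n,m}, with D^k = prod_j d^{k_j}/dx_j^{k_j}:
   D^k x^j = prod_i (j_i (j_i - 1) ... (j_i - k_i + 1)) x_i^(j_i - k_i) *)
Definition evalDQ (m n : nat) (kd : 'I_m -> nat) (c : mindex m n -> R[i])
    (x : 'rV[R]_m) : R[i] :=
  \sum_(k : mindex m n) c k *
     real_complex R (\prod_(j < m)
        (((k j : nat) ^_ (kd j))%N%:R * x ord0 j ^+ (k j - kd j)%N)).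

Definition cabs (z : R[i]) : R := Normc.normc z.

Definition supnorm (m : nat) (S : set 'rV[R]_m) (f : 'rV[R]_m -> R[i]) : R :=
  sup [set cabs (f y) | y in S].

(* Chebyshev polynomial T_n(u) = ((u + sqrt(u^2-1))^n + (u - sqrt(u^2-1))^n)/2;
   written with the real square root, hence literal for |u| >= 1 (the only
   region where it is used, together with its derivatives at |u| > 1) *)
Definition cheb (n : nat) (u : R) : R :=
  ((u + Num.sqrt (u ^+ 2 - 1)) ^+ n + (u - Num.sqrt (u ^+ 2 - 1)) ^+ n) / 2.

Definition cube (m : nat) (lam : R) : set 'rV[R]_m :=
  [set x | forall j, `|x ord0 j| <= lam].

End Defs.

(* Both bounds come from Lagrange interpolation at the extremal points
   eta_i = cos (i pi / n), 0 <= i <= n, of T_n: a polynomial p of degree <= n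
   is sum_i p(eta_i) l_i, and T_n = sum_i (-1)^i l_i.  For |t| > 1 all nodes
   lie on one side of t, so the numbers l_i^(k)(t) alternate in sign like
   (-1)^i and sum_i |l_i^(k)(t)| = |T_n^(k)(t)|.
   (a) Projecting a point y outside V onto V yields a pair of opposite
   supporting hyperplanes at distance < 2|y|, so V contains the ball of
   radius w(V)/2.  Writing x = s e with s = 2|x|/w(V) > 1 and |e| = w(V)/2,
   the points eta_i e lie in V, and interpolating t |-> P(t e) at the eta_i
   gives |P(x)| <= sum_i |l_i(s)| ||P|| = T_n(s) ||P||.
   (b) Interpolating in every variable on the grid of points
   (lam eta_(f 1), ..., lam eta_(f m)) of Q^m_lam writes D^k P(x) as a
   combination of values of P whose coefficients are products of the
   one-variable l_i^(k_j)(x_j / lam). *)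

From Pilot Require Import Defs.
From mathcomp Require Import all_boot all_order all_algebra.
From mathcomp Require Import all_classical all_reals all_analysis.
Import Order.TTheory GRing.Theory Num.Theory.
From mathcomp.real_closed Require Import complex.
From mathcomp Require Import ring lra zify.
Import numFieldNormedType.Exports.
Local Open Scope ring_scope.

Set Implicit Arguments.
Unset Strict Implicit.
Unset Printing Implicit Defensive.

Lemma derivn_XsubC_mul (R : comNzRingType) (c : R) (p : {poly R}) k :
  (('X - c%:P) * p)^`(k) = ('X - c%:P) * p^`(k) + p^`(k.-1) *+ k.
Proof.
elim: k => [|k IH]; first by rewrite !derivn0 mulr0n addr0.
rewrite derivnS IH derivD derivM derivXsubC mul1r derivMn -derivnS.
case: k IH => [|k] IH /=; first by rewrite mulr0n mulr1n addr0 addrC.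
rewrite (mulrS _ k.+1); ring.
Qed.

Section ProdXsubCDerivn.
Variables (R : realDomainType) (I : Type) (a : I -> R).

Lemma derivn_prod_XsubC_ge0 (r : seq I) t k :
  (forall j, a j < t) ->
  0 <= ((\prod_(j <- r) ('X - (a j)%:P))^`(k)).[t].
Proof.
move=> a_lt; elim: r k => [|b r IH] k.
  by rewrite big_nil -polyC1 derivnC; case: ifP => _; rewrite hornerC ?ler01.
rewrite big_cons derivn_XsubC_mul hornerD hornerM hornerMn hornerXsubC.
by rewrite addr_ge0 ?mulr_ge0 ?mulrn_wge0 // subr_ge0 ltW.
Qed.

Lemma derivn_prod_XsubC_sign (r : seq I) t k :
  (forall j, t < a j) ->
  0 <= (-1) ^+ (size r + k) * ((\prod_(j <- r) ('X - (a j)%:P))^`(k)).[t].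
Proof.
move=> a_gt; elim: r k => [|b r IH] k.
  rewrite big_nil -polyC1 derivnC; case: k => [|k] /=; rewrite hornerC ?mulr0 //.
  by rewrite expr0 mulr1 ler01.
have tb : 0 <= a b - t by rewrite subr_ge0 ltW.
rewrite big_cons derivn_XsubC_mul hornerD hornerM hornerMn hornerXsubC /=.
case: k => [|k].
  rewrite mulr0n addr0 addn0 exprS.
  have := mulr_ge0 tb (IH 0%N); rewrite addn0 derivn0.
  by congr (_ <= _); ring.
have := addr_ge0 (mulr_ge0 tb (IH k.+1)) (mulrn_wge0 k.+1 (IH k)).
rewrite addSn addnS !exprS -!mulrnAr /=; congr (_ <= _); ring.
Qed.

End ProdXsubCDerivn.

Section LagrangeInterpolation.
Variables (F : fieldType) (n : nat) (x : nat -> F).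
Hypothesis x_inj : injective x.
Local Notation ell i := (tnth (n.+1.-lagrange x) i).

Lemma horner_derivn_lagrange (p : {poly F}) k t : (size p <= n.+1)%N ->
  (p^`(k)).[t] = \sum_(i < n.+1) p.[x i] * ((ell i)^`(k)).[t].
Proof.
move=> sp; rewrite {1}(lagrange_gen (ltn0Sn n) x_inj sp) linear_sum horner_sum.
by apply: eq_bigr => i _; rewrite mul_polyC linearZ hornerZ.
Qed.

Lemma derivn_Xn_lagrange (e d : nat) (lam t : F) : lam != 0 -> (e <= n)%N ->
  (e ^_ d)%:R * t ^+ (e - d) =
  lam ^- d * \sum_(i < n.+1) (lam * x i) ^+ e * ((ell i)^`(d)).[t / lam].
Proof.
move=> lam0 en; have := horner_derivn_lagrange (p := 'X^e) d (t / lam).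
rewrite size_polyXn ltnS => /(_ en); rewrite derivnXn hornerMn hornerXn.
under [in X in _ = X -> _]eq_bigr do rewrite hornerXn.
move=> interp; under eq_bigr do rewrite exprMn -mulrA.
rewrite -mulr_sumr -interp; have [de|ed] := leqP d e.
  rewrite -[in lam ^+ e](subnK de) exprD expr_div_n -mulr_natl.
  by field; rewrite !expf_neq0.
by rewrite ffact_small // !mulr0n mul0r !mulr0.
Qed.

End LagrangeInterpolation.

Section LagrangeSign.
Variables (R : realFieldType) (n : nat) (x : nat -> R).
Hypothesis x_inj : injective x.
Hypothesis x_decr : forall i j, (i < j <= n)%N -> x j < x i.
Local Notation ell i := (tnth (n.+1.-lagrange x) i).

Local Notation node_poly i := (\prod_(j < n.+1 | j != i) ('X - (x j)%:P)).

Lemma lagrange_node_poly (i : 'I_n.+1) :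
  ell i = (node_poly i).[x i]^-1 *: node_poly i :> {poly R}.
Proof. by rewrite lagrangeE //= mul_polyC. Qed.

Lemma sign_horner_node_poly (i : 'I_n.+1) : 0 < (-1) ^+ i * (node_poly i).[x i].
Proof.
rewrite horner_prod (bigID (fun j : 'I_n.+1 => (j < i)%N)) /= mulrA.
apply: mulr_gt0.
  rewrite (eq_bigl (fun j : 'I_n.+1 => true && (j < i)%N)); last first.
    by move=> j; apply/andb_idl => ji; rewrite -val_eqE /= ltn_eqF.
  rewrite (big_ord_narrow_cond (ltnW (ltn_ord i))).
  have -> : (-1) ^+ i = (-1) ^+ #|'I_i| :> R by rewrite card_ord.
  rewrite -prodrN; apply: prodr_gt0 => j _.
  by rewrite hornerXsubC opprB subr_gt0 x_decr //= ltn_ord -ltnS ltn_ord.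
apply: prodr_gt0 => j /andP[ji]; rewrite -leqNgt hornerXsubC subr_gt0 => ij.
by apply: x_decr; rewrite ltn_neqAle eq_sym ji ij -ltnS ltn_ord.
Qed.

Lemma size_filter_neq (i : 'I_n.+1) :
  size [seq j <- index_enum 'I_n.+1 | j != i] = n.
Proof.
by rewrite size_filter -sum1_count sum1dep_card cardsE cardC1 card_ord.
Qed.

Lemma signed_lagrange_derivn (i : 'I_n.+1) k t :
  (-1) ^+ i * ((ell i)^`(k)).[t] =
  ((-1) ^+ i * (node_poly i).[x i])^-1 * ((node_poly i)^`(k)).[t].
Proof.
by rewrite lagrange_node_poly derivnZ hornerZ mulrA invfM -exprVn invrN1.
Qed.

Lemma lagrange_derivn_sign_right (i : 'I_n.+1) k t :
  (forall j : 'I_n.+1, x j < t) -> 0 <= (-1) ^+ i * ((ell i)^`(k)).[t].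
Proof.
move=> xt; rewrite signed_lagrange_derivn mulr_ge0 //.
  by rewrite invr_ge0 ltW ?sign_horner_node_poly.
by rewrite -big_filter; apply: (derivn_prod_XsubC_ge0 (a := fun j : 'I_n.+1 => x j)).
Qed.

Lemma lagrange_derivn_sign_left (i : 'I_n.+1) k t :
  (forall j : 'I_n.+1, t < x j) ->
  0 <= (-1) ^+ (n + k) * ((-1) ^+ i * ((ell i)^`(k)).[t]).
Proof.
move=> tx; rewrite signed_lagrange_derivn mulrCA mulr_ge0 //.
  by rewrite invr_ge0 ltW ?sign_horner_node_poly.
rewrite -big_filter -{1}(size_filter_neq i).
by apply: (derivn_prod_XsubC_sign (a := fun j : 'I_n.+1 => x j)).
Qed.

Lemma sum_abs_lagrange_derivn_right k t : (forall j : 'I_n.+1, x j < t) ->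
  \sum_(i < n.+1) `|((ell i)^`(k)).[t]| =
  \sum_(i < n.+1) (-1) ^+ i * ((ell i)^`(k)).[t].
Proof.
move=> xt; apply: eq_bigr => i _.
rewrite -(ger0_norm (lagrange_derivn_sign_right i k xt)).
by rewrite normrM normrX normrN1 expr1n mul1r.
Qed.

Lemma sum_abs_lagrange_derivn_left k t : (forall j : 'I_n.+1, t < x j) ->
  \sum_(i < n.+1) `|((ell i)^`(k)).[t]| =
  (-1) ^+ (n + k) * \sum_(i < n.+1) (-1) ^+ i * ((ell i)^`(k)).[t].
Proof.
move=> tx; rewrite mulr_sumr; apply: eq_bigr => i _.
rewrite -(ger0_norm (lagrange_derivn_sign_left i k tx)).
by rewrite !normrM !normrX normrN1 !expr1n !mul1r.
Qed.

End LagrangeSign.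

Local Open Scope classical_set_scope.

Section Chebyshev.
Variable R : realType.

Fixpoint chebp_pair (n : nat) : {poly R} * {poly R} :=
  if n is n'.+1 then
    let: (p, q) := chebp_pair n' in (q, 'X * q *+ 2 - p)
  else (1, 'X).
Definition chebp n := (chebp_pair n).1.

Lemma chebp0 : chebp 0 = 1. Proof. by []. Qed.
Lemma chebp1 : chebp 1 = 'X. Proof. by []. Qed.
Lemma chebpSS n : chebp n.+2 = 'X * chebp n.+1 *+ 2 - chebp n.
Proof. by rewrite /chebp /=; case: (chebp_pair n). Qed.

Lemma size_chebp n : (size (chebp n) <= n.+1)%N.
Proof.
suff: (size (chebp n) <= n.+1)%N /\ (size (chebp n.+1) <= n.+2)%N by case.
elim: n => [|n [IHn IHn1]]; first by rewrite chebp0 chebp1 size_poly1 size_polyX.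
split=> //; rewrite chebpSS.
apply: (leq_trans (size_polyD _ _)); rewrite size_polyN geq_max.
apply/andP; split; last by apply: (leq_trans IHn); lia.
rewrite mulr2n; apply: (leq_trans (size_polyD _ _)); rewrite geq_max andbb.
by apply: (leq_trans (size_polyMleq _ _)); rewrite size_polyX.
Qed.

Lemma horner_chebp_cos n t : (chebp n).[cos t] = cos (n%:R * t).
Proof.
suff: (chebp n).[cos t] = cos (n%:R * t) /\
      (chebp n.+1).[cos t] = cos (n.+1%:R * t) by case.
elim: n => [|n [IHn IHn1]]; first by rewrite chebp0 chebp1 !hornerE cos0.
split=> //; rewrite chebpSS !hornerE IHn IHn1.
have -> : n.+2%:R * t = n.+1%:R * t + t by rewrite -natr1 mulrDl mul1r.
have -> : n%:R * t = n.+1%:R * t - t by rewrite -natr1 mulrDl mul1r addrK.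
rewrite !cosD cosN sinN; ring.
Qed.

Lemma cheb_chebp n u : 1 <= `|u| -> cheb n u = (chebp n).[u].
Proof.
move=> u1; rewrite /cheb; set s := Num.sqrt (u ^+ 2 - 1).
have s2 : s ^+ 2 = u ^+ 2 - 1.
  by rewrite sqr_sqrtr // subr_ge0 -real_normK ?num_real // exprn_ege1.
have e1 : (u + s) ^+ 2 = 2 * u * (u + s) - 1 by rewrite sqrrD s2; ring.
have e2 : (u - s) ^+ 2 = 2 * u * (u - s) - 1 by rewrite sqrrB s2; ring.
suff: ((u + s) ^+ n + (u - s) ^+ n) / 2 = (chebp n).[u] /\
      ((u + s) ^+ n.+1 + (u - s) ^+ n.+1) / 2 = (chebp n.+1).[u] by case.
elim: n => [|n [IHn IHn1]].
  by rewrite chebp0 chebp1 hornerC hornerX !expr0 !expr1; split; field.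
split=> //; rewrite chebpSS !hornerE -IHn -IHn1.
by rewrite -[n.+2]addn2 !exprD e1 e2 !exprS mulr2n; field.
Qed.

Lemma open_abs_gt1 : open [set z : R | 1 < `|z|].
Proof.
have -> : [set z : R | 1 < `|z|] = [set z | 1 < z] `|` [set z | z < -1].
  by apply/seteqP; split => z /=; rewrite ltr_normr ltrNr => /orP.
by apply: openU; [apply: open_gt | apply: open_lt].
Qed.

Lemma derive1n_eq_horner (U : set R) (f : R -> R) (p : {poly R}) k y :
  open U -> (forall z, U z -> f z = p.[z]) -> U y ->
  derive1n k f y = (p^`(k)).[y].
Proof.
move=> oU fp; elim: k y => [|k IHk] y Uy; first exact: fp.
have nearU : \forall z \near y, U z by apply: open_nbhs_nbhs.
rewrite /= derive1E (@near_eq_derive _ _ _ _ (horner (p^`(k)))).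
  by rewrite -derive1E -derivE.
by apply: filterS nearU => z; apply: IHk.
Qed.

Lemma derive1n_cheb n k t : 1 < `|t| ->
  derive1n k (cheb n) t = ((chebp n)^`(k)).[t].
Proof.
apply: derive1n_eq_horner open_abs_gt1 _ => z z1.
by rewrite cheb_chebp // ltW.
Qed.

(* Outside [0, n] the nodes are padded with values > 1, only to make
   [cheb_node n] injective on nat as [lagrange] requires. *)
Definition cheb_node (n i : nat) : R :=
  if (i <= n)%N then cos (i%:R * pi / n%:R) else i%:R + 1.

Lemma cheb_node_le1 n i : (i <= n)%N -> `|cheb_node n i| <= 1.
Proof. by rewrite /cheb_node => ->; apply: cos_max. Qed.

Lemma cheb_node_decr n i j : (i < j <= n)%N -> cheb_node n j < cheb_node n i.
Proof.
move=> /andP[ij jn]; have i_n : (i <= n)%N by lia.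
have n_gt0 : (0 < n)%N by lia.
have arg_in l : (l <= n)%N -> l%:R * pi / n%:R \in `[0, pi]%R.
  move=> ln; rewrite in_itv /= divr_ge0 ?mulr_ge0 ?pi_ge0 //=.
  by rewrite ler_pdivrMr ?ltr0n // mulrC ler_pM2l ?pi_gt0 // ler_nat.
rewrite /cheb_node jn i_n ltr_cos ?arg_in //.
by rewrite ltr_pM2r ?invr_gt0 ?ltr0n // ltr_pM2r ?pi_gt0 // ltr_nat.
Qed.

Lemma cheb_node_inj n : injective (cheb_node n).
Proof.
have out l : (n < l)%N -> 1 < cheb_node n l.
  by move=> nl; rewrite /cheb_node leqNgt nl ltrDr ltr0n; apply: leq_ltn_trans nl.
have neq l l' : (l < l')%N -> cheb_node n l != cheb_node n l'.
  move=> ll'; case: (leqP l' n) => l'n.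
    by rewrite gt_eqF // cheb_node_decr // ll' l'n.
  rewrite lt_eqF //; case: (leqP l n) => ln.
    exact: le_lt_trans (ler_norm _) (le_lt_trans (cheb_node_le1 ln) (out _ l'n)).
  by rewrite /cheb_node leqNgt ln leqNgt l'n /= ltrD2r ltr_nat.
move=> i j eij; case: (ltngtP i j) => // [/neq|/neq]; by rewrite eij eqxx.
Qed.

Lemma horner_chebp_node n i : (i <= n)%N -> (chebp n).[cheb_node n i] = (-1) ^+ i.
Proof.
move=> i_n; rewrite /cheb_node i_n; case: n i_n => [|n] i_n.
  by move: i_n; rewrite leqn0 => /eqP ->; rewrite chebp0 hornerC expr0.
rewrite horner_chebp_cos mulrC divfK ?pnatr_eq0 //.
elim: i {i_n} => [|i IHi]; first by rewrite mul0r cos0.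
by rewrite -natr1 mulrDl mul1r cosDpi IHi exprS mulN1r.
Qed.

Local Notation ell n i := (tnth (n.+1.-lagrange (cheb_node n)) i).

Lemma horner_derivn_chebp n k t :
  ((chebp n)^`(k)).[t] = \sum_(i < n.+1) (-1) ^+ i * ((ell n i)^`(k)).[t].
Proof.
rewrite (horner_derivn_lagrange (@cheb_node_inj n) _ _ (size_chebp n)).
by apply: eq_bigr => i _; rewrite horner_chebp_node // -ltnS.
Qed.

Lemma sum_abs_lagrange_cheb_gt1 n t : 1 < t ->
  \sum_(i < n.+1) `|(ell n i).[t]| = (chebp n).[t].
Proof.
move=> t1; rewrite -[chebp n]derivn0 horner_derivn_chebp.
rewrite -(sum_abs_lagrange_derivn_right (@cheb_node_inj n) (@cheb_node_decr n)).
  by apply: eq_bigr => i _; rewrite derivn0.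
move=> j; apply: le_lt_trans (ler_norm _) (le_lt_trans _ t1).
by rewrite cheb_node_le1 // -ltnS.
Qed.

Lemma sum_abs_lagrange_derivn_cheb n k t : 1 < `|t| ->
  \sum_(i < n.+1) `|((ell n i)^`(k)).[t]| = `|((chebp n)^`(k)).[t]|.
Proof.
move=> t1; have node_lt (j : 'I_n.+1) : `|cheb_node n j| < `|t|.
  by rewrite (le_lt_trans _ t1) // cheb_node_le1 // -ltnS.
rewrite -[LHS]ger0_norm ?sumr_ge0 // horner_derivn_chebp.
have [t_gt0|t_le0] := ltrP 0 t.
  rewrite (sum_abs_lagrange_derivn_right (@cheb_node_inj n) (@cheb_node_decr n)) //.
  by move=> j; rewrite (le_lt_trans (ler_norm _)) // -(gtr0_norm t_gt0).
rewrite (sum_abs_lagrange_derivn_left (@cheb_node_inj n) (@cheb_node_decr n)).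
  by rewrite normrM normrX normrN1 expr1n mul1r.
move=> j; rewrite -(opprK t) -(ler0_norm t_le0) ltrNl.
by rewrite (le_lt_trans _ (node_lt j)) // -normrN ler_norm.
Qed.

End Chebyshev.

Section EuclideanNorm.
Variables (R : realType) (m : nat).
Implicit Types (x y z u : 'rV[R]_m) (a : R).

Lemma dotvC x y : dotv x y = dotv y x.
Proof. by apply: eq_bigr => j _; rewrite mulrC. Qed.

Lemma dotvDl x y z : dotv (x + y) z = dotv x z + dotv y z.
Proof. by rewrite /dotv -big_split; apply: eq_bigr => j _; rewrite mxE mulrDl. Qed.

Lemma dotvZl a x y : dotv (a *: x) y = a * dotv x y.
Proof. by rewrite /dotv mulr_sumr; apply: eq_bigr => j _; rewrite mxE mulrA. Qed.

Lemma dotvNl x y : dotv (- x) y = - dotv x y.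
Proof. by rewrite -scaleN1r dotvZl mulN1r. Qed.

Lemma dotvBl x y z : dotv (x - y) z = dotv x z - dotv y z.
Proof. by rewrite dotvDl dotvNl. Qed.

Lemma dotvZr a x y : dotv x (a *: y) = a * dotv x y.
Proof. by rewrite dotvC dotvZl dotvC. Qed.

Lemma dotvBr x y z : dotv x (y - z) = dotv x y - dotv x z.
Proof. by rewrite dotvC dotvBl !(dotvC x). Qed.

Lemma dotvvBZ x y a :
  dotv (x - a *: y) (x - a *: y) = dotv x x - 2 * a * dotv x y + a ^+ 2 * dotv y y.
Proof. by rewrite dotvBl !dotvBr !dotvZl !dotvZr (dotvC y x); ring. Qed.

Lemma dotvv_ge0 x : 0 <= dotv x x.
Proof. by apply: sumr_ge0 => j _; rewrite -expr2 sqr_ge0. Qed.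

Lemma dotvv_eq0 x : (dotv x x == 0) = (x == 0).
Proof.
apply/eqP/eqP => [xx0|->]; last by rewrite /dotv big1 // => j _; rewrite mxE mul0r.
apply/rowP => j; rewrite mxE; apply/eqP; rewrite -sqrf_eq0.
by rewrite (psumr_eq0P (fun i _ => sqr_ge0 (x ord0 i)) xx0).
Qed.

Lemma enorm_ge0 x : 0 <= enorm x.
Proof. exact: sqrtr_ge0. Qed.

Lemma enorm_gt0 x : x != 0 -> 0 < enorm x.
Proof. by move=> x0; rewrite sqrtr_gt0 lt_def dotvv_ge0 dotvv_eq0 x0. Qed.

Lemma sqr_enorm x : enorm x ^+ 2 = dotv x x.
Proof. by rewrite sqr_sqrtr // dotvv_ge0. Qed.

Lemma enormZ a x : enorm (a *: x) = `|a| * enorm x.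
Proof. by rewrite /enorm dotvZl dotvZr mulrA -expr2 sqrtrM ?sqr_ge0 // sqrtr_sqr. Qed.

Lemma enormN x : enorm (- x) = enorm x.
Proof. by rewrite -scaleN1r enormZ normrN1 mul1r. Qed.

Lemma coord_le_enorm x j : `|x ord0 j| <= enorm x.
Proof.
rewrite -sqrtr_sqr ler_wsqrtr // /dotv (bigD1 j) //= expr2 lerDl.
by apply: sumr_ge0 => i _; rewrite -expr2 sqr_ge0.
Qed.

Lemma dotv_le_enorm x u : enorm u = 1 -> dotv x u <= enorm x.
Proof.
move=> u1; have uu : dotv u u = 1 by rewrite -sqr_enorm u1 expr1n.
have := dotvv_ge0 (x - dotv x u *: u).
rewrite dotvvBZ uu -sqr_enorm; have := enorm_ge0 x; nra.
Qed.

End EuclideanNorm.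

Section ConvexBody.
Variables (R : realType) (m : nat).
Implicit Types (V : set 'rV[R]_m) (x y p v : 'rV[R]_m).

Lemma coord_le_mx_norm x j : `|x ord0 j| <= `|x|.
Proof.
rewrite [leRHS]/Num.norm /= mx_normrE.
exact: (le_bigmax 0 (fun ij : 'I_1 * 'I_m => `|x ij.1 ij.2|) (ord0, j)).
Qed.

Lemma mx_norm_le_enorm x : `|x| <= enorm x.
Proof.
rewrite [leLHS]/Num.norm /= mx_normrE; elim/big_ind: _ => //.
- exact: enorm_ge0.
- by move=> a b xa xb; rewrite ge_max xa xb.
by move=> [i j] _ /=; rewrite (ord1 i) coord_le_enorm.
Qed.

Lemma enorm_le_mx_norm x : enorm x <= m%:R * `|x|.
Proof.
rewrite -[leRHS]ger0_norm ?mulr_ge0 // -sqrtr_sqr ler_wsqrtr //.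
apply: (@le_trans _ _ (\sum_(j < m) `|x| ^+ 2)).
  apply: ler_sum => j _; rewrite -expr2 -real_normK ?num_real //.
  by rewrite lerXn2r ?nnegrE ?coord_le_mx_norm.
rewrite sumr_const card_ord -[leLHS]mulr_natl exprMn ler_wpM2r ?sqr_ge0 //.
by rewrite -natrX ler_nat; case: m => // k; rewrite leq_pmulr.
Qed.

Lemma closed_eclosed V : eclosed V -> closed V.
Proof.
move=> clV p clp; apply: clV => e e_gt0.
have d_gt0 : 0 < e / m.+1%:R by rewrite divr_gt0.
have [v [Vv pv]] := clp _ (nbhsx_ballx p _ d_gt0); exists v => //.
move: pv; rewrite mx_norm_ball /= => pv.
apply: le_lt_trans (enorm_le_mx_norm _) _.
apply: le_lt_trans (ler_wpM2l (ler0n _ m) (ltW pv)) _.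
by rewrite mulrCA gtr_pMr // ltr_pdivrMr ?ltr0n // mul1r ltr_nat.
Qed.

Lemma bounded_ebounded V : ebounded V -> bounded_set V.
Proof.
move=> [B VB]; exists B; split; first exact: num_real.
move=> M BM v Vv; apply: le_trans (mx_norm_le_enorm v) _.
exact: le_trans (VB v Vv) (ltW BM).
Qed.

Lemma continuous_dotvvB y : continuous (fun v : 'rV[R]_m => dotv (y - v) (y - v)).
Proof.
have -> : (fun v : 'rV[R]_m => dotv (y - v) (y - v)) =
    (fun v => \sum_(j < m) (y ord0 j - v ord0 j) * (y ord0 j - v ord0 j)).
  by apply/funext => v; apply: eq_bigr => j _; rewrite !mxE.
apply: (@continuous_big R _ +%R 0 xpredT add_continuous _ (index_enum 'I_m)
  (fun j v => (y ord0 j - v ord0 j) * (y ord0 j - v ord0 j))) => j _ v.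
have yv : {for v, continuous (fun w : 'rV[R]_m => y ord0 j - w ord0 j)}.
  apply: (@continuousB _ _ _ (cst (y ord0 j)) (fun w : 'rV[R]_m => w ord0 j)).
    exact: cst_continuous.
  exact: coord_continuous.
exact: (continuousM yv yv).
Qed.

Lemma nearest_point V y : eclosed V -> ebounded V -> Defs.convex_set V -> V !=set0 ->
  exists2 p, V p & forall v, V v -> dotv (y - p) (v - p) <= 0.
Proof.
move=> clV bdV cvV V0.
have cpV : compact V :=
  bounded_closed_compact (bounded_ebounded bdV) (closed_eclosed clV).
have [p /set_mem Vp p_min] :=
  compact_EVT_min V0 cpV (continuous_subspaceT (@continuous_dotvvB y)).
exists p => // v Vv; set A := dotv (y - p) (v - p); set B := dotv (v - p) (v - p).
have B_ge0 : 0 <= B := dotvv_ge0 _.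
have small_step t : 0 < t -> t <= 1 -> 2 * A <= t * B.
  move=> t_gt0 t_le1.
  have Vt : V (t *: v + (1 - t) *: p) by apply: cvV; rewrite // ltW.
  have := p_min _ (mem_set Vt).
  have -> : y - (t *: v + (1 - t) *: p) = (y - p) - t *: (v - p).
    by apply/rowP => j; rewrite !mxE; ring.
  rewrite dotvvBZ -/A -/B => le_pt.
  have : 0 <= t * (t * B - 2 * A) by nra.
  by rewrite pmulr_rge0 // subr_ge0.
rewrite leNgt; apply/negP => A_gt0.
have AB_gt0 : 0 < A + B by lra.
have t_le1 : A / (A + B) <= 1 by rewrite ler_pdivrMr // mul1r; lra.
have := small_step _ (divr_gt0 A_gt0 AB_gt0) t_le1.
rewrite mulrAC ler_pdivlMr //; nra.
Qed.

Lemma symmetric_ball0 V : Defs.convex_set V -> centrally_symmetric V ->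
  nonempty_interior V -> exists2 r : R, 0 < r & forall y, enorm y < r -> V y.
Proof.
move=> cvV symV [x0 [r [r_gt0 x0r]]]; exists r => // y yr.
have V1 : V (x0 + y) by apply: x0r; rewrite addrAC subrr add0r.
have V2 : V (- x0 + y).
  have -> : - x0 + y = - (x0 - y) by rewrite opprB addrC.
  by apply/symV/x0r; rewrite addrAC subrr add0r enormN.
have := cvV _ _ (1 / 2) V1 V2.
have -> : 1 / 2 *: (x0 + y) + (1 - 1 / 2) *: (- x0 + y) = y.
  by apply/rowP => j; rewrite !mxE; field.
by apply; rewrite divr_ge0 ?ler_pdivrMr //= ?mul1r; lra.
Qed.

Section Width.
Variables (V : set 'rV[R]_m) (r : R).
Hypotheses (clV : eclosed V) (bdV : ebounded V) (cvV : Defs.convex_set V).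
Hypotheses (symV : centrally_symmetric V) (r_gt0 : 0 < r).
Hypothesis ballV : forall y, enorm y < r -> V y.

Lemma half_radius_in_ball u : enorm u = 1 -> V ((r / 2) *: u).
Proof.
move=> u1; apply: ballV; rewrite enormZ u1 mulr1 ger0_norm ?divr_ge0 ?ltW //.
by rewrite ltr_pdivrMr // ltr_pMr // ltr1n.
Qed.

Lemma supporting_pair_outside y : ~ V y -> exists u h,
  [/\ supporting_hyperplane V u h, supporting_hyperplane V u (- h),
      0 < h & h < enorm y].
Proof.
move=> Vy; have V0 : V 0.
  by apply: ballV; rewrite /enorm /dotv big1 ?sqrtr0 // => j _; rewrite mxE mul0r.
have [p Vp p_near] := nearest_point y clV bdV cvV (ex_intro _ 0 V0).
have yp0 : y - p != 0 by rewrite subr_eq0; apply: contraPneq Vy => ->.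
set u := (enorm (y - p))^-1 *: (y - p).
have u1 : enorm u = 1.
  by rewrite enormZ ger0_norm ?invr_ge0 ?enorm_ge0 // mulVf ?gt_eqF ?enorm_gt0.
set h := dotv p u.
have Vh v : V v -> dotv v u <= h.
  move=> Vv; rewrite -subr_le0 -dotvBl dotvZr dotvC.
  by rewrite pmulr_rle0 ?invr_gt0 ?enorm_gt0 ?p_near.
have yu : dotv y u = h + enorm (y - p).
  rewrite -[in LHS](subrK p y) dotvDl dotvZr -sqr_enorm addrC; congr (_ + _).
  by rewrite expr2 mulrA mulVf ?mul1r ?gt_eqF ?enorm_gt0.
exists u, h; split.
- by split=> //; split; [left | exists p].
- split=> //; split; last by exists (- p); [apply: symV | rewrite dotvNl].
  by right => v Vv; rewrite lerNl -dotvNl; apply/Vh/symV.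
- have := Vh _ (half_radius_in_ball u1).
  rewrite dotvZl -sqr_enorm u1 expr1n mulr1; apply: lt_le_trans.
  by rewrite divr_gt0.
- have := dotv_le_enorm y u1; have := enorm_gt0 yp0; lra.
Qed.

Lemma supporting_gap_ge u c1 c2 : supporting_hyperplane V u c1 ->
  supporting_hyperplane V u c2 -> c1 != c2 -> r <= `|c1 - c2|.
Proof.
move=> [u1 [side1 [w1 Vw1 w1c]]] [_ [side2 [w2 Vw2 w2c]]] c12.
have uu : dotv u u = 1 by rewrite -sqr_enorm u1 expr1n.
have Vr := half_radius_in_ball u1; have Vnr := symV Vr.
have rE : dotv ((r / 2) *: u) u = r / 2 by rewrite dotvZl uu mulr1.
have nrE : dotv (- ((r / 2) *: u)) u = - (r / 2) by rewrite dotvNl rE.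
have c12' : c1 <> c2 by apply/eqP.
case: side1 => side1; case: side2 => side2.
- have := side1 _ Vw2; have := side2 _ Vw1; rewrite w1c w2c; lra.
- have := side1 _ Vr; have := side2 _ Vnr; rewrite rE nrE ler_normr; lra.
- have := side1 _ Vnr; have := side2 _ Vr; rewrite rE nrE ler_normr; lra.
- have := side1 _ Vw2; have := side2 _ Vw1; rewrite w1c w2c; lra.
Qed.

Lemma width_bounds y : ~ V y -> r <= width V /\ width V < 2 * enorm y.
Proof.
move=> Vy; have [u [h [Sh Snh h_gt0 hy]]] := supporting_pair_outside Vy.
set E := [set d : R | exists u c1 c2, [/\ supporting_hyperplane V u c1,
  supporting_hyperplane V u c2, c1 != c2 & d = `|c1 - c2|]].
have E2h : E (2 * h).
  exists u, h, (- h); split => //; first by rewrite -subr_eq0 opprK; lra.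
  by rewrite opprK ger0_norm; lra.
split.
  apply: lb_le_inf; first by exists (2 * h).
  by move=> _ [v [c1 [c2 [S1 S2 c12 ->]]]]; apply: supporting_gap_ge S1 S2 c12.
apply: le_lt_trans (ge_inf _ E2h) _; last lra.
by exists 0 => _ [v [c1 [c2 [_ _ _ ->]]]].
Qed.

Lemma width_ball y : (exists z, ~ V z) -> enorm y <= width V / 2 -> V y.
Proof.
move=> [z Vz] yw; have w_gt0 : 0 < width V.
  by have [rw _] := width_bounds Vz; apply: lt_le_trans rw.
apply: contrapT => Vy; have [_] := width_bounds Vy; lra.
Qed.

End Width.

End ConvexBody.

Section ComplexModulus.
Variable R : realType.
Local Notation RC := (real_complex R).

Lemma cabs_real (r : R) : cabs (RC r) = `|r|.
Proof. by rewrite /cabs /= expr0n /= addr0 sqrtr_sqr. Qed.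

Lemma cabs_ge0 (z : R[i]) : 0 <= cabs z.
Proof. by case: z => a b; rewrite /cabs /= sqrtr_ge0. Qed.

Lemma cabsM (z w : R[i]) : cabs (z * w) = cabs z * cabs w.
Proof. exact: Normc.normcM. Qed.

Lemma cabs_sum I (r : seq I) (P : pred I) (F : I -> R[i]) :
  cabs (\sum_(i <- r | P i) F i) <= \sum_(i <- r | P i) cabs (F i).
Proof.
elim/big_rec2: _ => [|i y z _ yz]; first by rewrite /cabs /= expr0n /= addr0 sqrtr0.
by apply: le_trans (le_normcD _ _) _; rewrite lerD2l.
Qed.

Lemma cabs_le_supnorm m (S : set 'rV[R]_m) (f : 'rV[R]_m -> R[i]) y :
  (exists B, forall z, S z -> cabs (f z) <= B) -> S y -> cabs (f y) <= supnorm S f.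
Proof.
move=> [B fB] Sy; apply: ub_le_sup; last by exists y.
by exists B => _ [z Sz <-]; apply: fB.
Qed.

Lemma monom_sum_bounded m n (P : pred (mindex m n)) (c : mindex m n -> R[i])
    (S : set 'rV[R]_m) (B : R) : (forall z j, S z -> `|z ord0 j| <= B) ->
  exists M, forall z, S z -> cabs (\sum_(k | P k) c k * RC (monom k z)) <= M.
Proof.
move=> SB; exists (\sum_(k | P k) cabs (c k) * \prod_j B ^+ k j) => z Sz.
apply: le_trans (cabs_sum _ _ _) _; apply: ler_sum => k _.
rewrite cabsM cabs_real ler_wpM2l ?cabs_ge0 // /monom normr_prod.
apply: ler_prod => j _; rewrite normr_ge0 normrX lerXn2r ?nnegrE ?SB //.
exact: le_trans (normr_ge0 _) (SB z j Sz).
Qed.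

End ComplexModulus.

Section TensorInterpolation.
Variables (R : realType) (m n : nat).
Local Notation RC := (real_complex R).
Local Notation node := (@cheb_node R n).
Local Notation ell i := (tnth (n.+1.-lagrange node) i).

Definition cheb_grid (lam : R) (f : mindex m n) : 'rV[R]_m :=
  \row_j (lam * node (f j)).

Lemma monom_cheb_grid lam f (k : mindex m n) :
  monom k (cheb_grid lam f) = \prod_j (lam * node (f j)) ^+ k j.
Proof. by apply: eq_bigr => j _; rewrite mxE. Qed.

Lemma derivn_monom_interp (kd : 'I_m -> nat) (x : 'rV[R]_m) lam (k : mindex m n) :
  0 < lam ->
  \prod_(j < m) (((k j : nat) ^_ (kd j))%:R * x ord0 j ^+ (k j - kd j)) =
  lam ^- (\sum_j kd j)%N * \sum_(f : mindex m n)
    monom k (cheb_grid lam f) * \prod_j ((ell (f j))^`(kd j)).[x ord0 j / lam].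
Proof.
move=> lam_gt0; rewrite (eq_bigr _ (fun j _ =>
  @derivn_Xn_lagrange _ _ _ (@cheb_node_inj R n) (k j) (kd j) _ (x ord0 j)
    (lt0r_neq0 lam_gt0) (ltn_ord (k j)))).
rewrite big_split /= prodfV prodrXr bigA_distr_bigA; congr (_ * _).
by apply: eq_bigr => f _; rewrite monom_cheb_grid -big_split.
Qed.

Lemma evalDQ_cheb_interp (kd : 'I_m -> nat) (c : mindex m n -> R[i]) x lam :
  0 < lam ->
  evalDQ kd c x = RC (lam ^- (\sum_j kd j)%N) *
    \sum_(f : mindex m n) RC (\prod_j ((ell (f j))^`(kd j)).[x ord0 j / lam]) *
       evalQ c (cheb_grid lam f).
Proof.
move=> lam_gt0; rewrite /evalDQ /evalQ.
under [X in X = _]eq_bigr => k _ do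
  rewrite (derivn_monom_interp _ _ _ lam_gt0) rmorphM rmorph_sum !mulr_sumr.
rewrite exchange_big mulr_sumr; apply: eq_bigr => f _; rewrite mulrA mulr_sumr.
by apply: eq_bigr => k _; rewrite !rmorphM; ring.
Qed.

Lemma cabs_evalDQ_le (kd : 'I_m -> nat) (c : mindex m n -> R[i])
    (x : 'rV[R]_m) (lam : R) :
  0 < lam -> (forall j, lam < `|x ord0 j|) ->
  cabs (evalDQ kd c x) <=
    lam ^- (\sum_(j < m) kd j)%N *
    `|\prod_(j < m) derive1n (kd j) (cheb n) (x ord0 j / lam)| *
    supnorm (@cube R m lam) (evalQ c).
Proof.
move=> lam_gt0 lam_x; set M := supnorm _ _.
have x_out j : 1 < `|x ord0 j / lam|.
  by rewrite normrM normfV (gtr0_norm lam_gt0) ltr_pdivlMr // mul1r.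
have grid_le f : cabs (evalQ c (cheb_grid lam f)) <= M.
  apply: cabs_le_supnorm.
    by apply: (@monom_sum_bounded _ _ _ _ _ _ lam) => z j; apply.
  move=> j; rewrite mxE normrM (gtr0_norm lam_gt0) ler_piMr ?(ltW lam_gt0) //.
  by rewrite cheb_node_le1 // -ltnS.
have lam_pow_ge0 : 0 <= lam ^- (\sum_j kd j)%N by rewrite invr_ge0 exprn_ge0 ?ltW.
rewrite (evalDQ_cheb_interp _ _ _ lam_gt0) cabsM cabs_real ger0_norm //.
rewrite -mulrA ler_wpM2l //.
apply: le_trans (cabs_sum _ _ _) _.
have -> : `|\prod_j derive1n (kd j) (cheb n) (x ord0 j / lam)| =
    \prod_j \sum_(i < n.+1) `|((ell i)^`(kd j)).[x ord0 j / lam]|.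
  rewrite normr_prod; apply: eq_bigr => j _.
  by rewrite derive1n_cheb // sum_abs_lagrange_derivn_cheb.
rewrite bigA_distr_bigA mulr_suml; apply: ler_sum => f _.
rewrite cabsM cabs_real normr_prod mulrC [leRHS]mulrC ler_wpM2r //.
by apply: prodr_ge0 => j _.
Qed.

End TensorInterpolation.

Section LineInterpolation.
Variables (R : realType) (m n : nat).
Local Notation RC := (real_complex R).
Local Notation node := (@cheb_node R n).
Local Notation ell i := (tnth (n.+1.-lagrange node) i).

Lemma monomZ (k : mindex m n) (a : R) (e : 'rV[R]_m) :
  monom k (a *: e) = a ^+ deg k * monom k e.
Proof.
by rewrite /monom /deg -prodrXr -big_split; apply: eq_bigr => j _; rewrite mxE exprMn.
Qed.

Lemma evalP_line (c : mindex m n -> R[i]) (s : R) (e : 'rV[R]_m) :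
  evalP c (s *: e) = \sum_(i < n.+1) RC (ell i).[s] * evalP c (node i *: e).
Proof.
rewrite /evalP; under eq_bigr => k kn.
  rewrite monomZ.
  have := @horner_derivn_lagrange _ n _ (@cheb_node_inj R n) 'X^(deg k) 0 s.
  rewrite size_polyXn ltnS derivn0 hornerXn => /(_ kn) ->.
  rewrite mulr_suml rmorph_sum mulr_sumr.
  over.
rewrite exchange_big; apply: eq_bigr => i _; rewrite mulr_sumr.
by apply: eq_bigr => k _; rewrite monomZ hornerXn derivn0 !rmorphM; ring.
Qed.

Lemma cabs_evalP_le (V : set 'rV[R]_m) (x : 'rV[R]_m) (c : mindex m n -> R[i]) :
  convex_body V -> centrally_symmetric V -> ~ V x ->
  cabs (evalP c x) <= cheb n (2 * enorm x / width V) * supnorm V (evalP c).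
Proof.
move=> [clV bdV cvV intV] symV Vx.
have [r r_gt0 ballV] := symmetric_ball0 cvV symV intV.
have [rw wx] := width_bounds clV bdV cvV symV r_gt0 ballV Vx.
set w := width V in rw wx *; have w_gt0 : 0 < w := lt_le_trans r_gt0 rw.
set s := 2 * enorm x / w.
have s_gt1 : 1 < s by rewrite /s ltr_pdivlMr // mul1r.
have x_gt0 : 0 < enorm x by lra.
set e := (w / (2 * enorm x)) *: x.
have xE : x = s *: e.
  rewrite /e scalerA (_ : s * _ = 1) ?scale1r // /s.
  by field; rewrite !gt_eqF.
have [B VB] := bdV.
have node_le (i : 'I_n.+1) : cabs (evalP c (node i *: e)) <= supnorm V (evalP c).
  apply: cabs_le_supnorm.
    apply: (@monom_sum_bounded _ _ _ _ _ _ B) => z j Vz.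
    exact: le_trans (coord_le_enorm _ _) (VB z Vz).
  apply: (width_ball clV bdV cvV symV r_gt0 ballV (ex_intro _ x Vx)).
  rewrite /e !enormZ (_ : `|w / (2 * enorm x)| * enorm x = w / 2).
    by rewrite ler_piMl ?divr_ge0 ?(ltW w_gt0) // cheb_node_le1 // -ltnS.
  by rewrite ger0_norm ?divr_ge0 ?ltW ?mulr_gt0 //; field; rewrite gt_eqF.
rewrite {1}xE evalP_line; apply: le_trans (cabs_sum _ _ _) _.
rewrite cheb_chebp; last by rewrite (le_trans (ltW s_gt1)) ?ler_norm.
rewrite -sum_abs_lagrange_cheb_gt1 // mulr_suml; apply: ler_sum => i _.
by rewrite cabsM cabs_real ler_wpM2l.
Qed.

End LineInterpolation.

Theorem lemmaL2p4 (R : realType) :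
  (* (a) *)
  (forall (m n : nat) (V : set 'rV[R]_m) (x : 'rV[R]_m) (c : mindex m n -> R[i]),
     convex_body V -> centrally_symmetric V -> ~ V x ->
     cabs (evalP c x) <= cheb n (2 * enorm x / width V) * supnorm V (evalP c))
  /\
  (* (b) *)
  (forall (m n : nat) (lam : R) (kd : 'I_m -> nat) (x : 'rV[R]_m)
          (c : mindex m n -> R[i]),
     0 < lam -> (forall j, lam < `|x ord0 j|) ->
     cabs (evalDQ kd c x) <=
       lam ^- (\sum_(j < m) kd j)%N *
       `|\prod_(j < m) derive1n (kd j) (cheb n) (x ord0 j / lam)| *
       supnorm (@cube R m lam) (evalQ c)).
Proof.
split=> [m n V x c|m n lam kd x c]; first exact: cabs_evalP_le.
exact: cabs_evalDQ_le.
Qed.
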